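(* Let $\mathbb{A}=(\mathbb{L},\Box_s,\Diamond_s,\Box_\ell,\Diamond_\ell)$ be an abstract Kent algebra. Then: (i) $\mathbb{A}$ satisfies, for all $a,b$, ''$\Box_\ell a\le\Box_\ell b$ and $\Diamond_\ell a\le\Diamond_\ell b$ imply $a\le b$'' if and only if $a\wedge\Box_\ell b\le\Diamond_\ell a\vee b$ for all $a,b\in\mathbb{L}$; (ii) $\mathbb{A}$ satisfies, for all $a,b$, ''$\Box_s a\le\Box_s b$ and $\Diamond_s a\le\Diamond_s b$ imply $a\le b$'' if and only if $a\wedge\Diamond_s b\le\Box_s a\vee b$ for all $a,b\in\mathbb{L}$.
   Context: An abstract Kent algebra (aKa) is a structure $(\mathbb{L},\Box_s,\Diamond_s,\Box_\ell,\Diamond_\ell)$ where $\mathbb{L}$ is a lattice and the four unary operations satisfy, for all $a,b$: $\Diamond_s a\le b\iff a\le\Box_s b$; $\Diamond_\ell a\le b\iff a\le\Box_\ell b$; $\Box_s a\le a$, $a\le\Diamond_s a$, $a\le\Box_\ell a$, $\Diamond_\ell a\le a$; $\Box_s a\le\Box_s\Box_s a$, $\Diamond_s\Diamond_s a\le\Diamond_s a$, $\Box_\ell\Box_\ell a\le\Box_\ell a$, $\Diamond_\ell a\le\Diamond_\ell\Diamond_\ell a$. An aKa satisfying the quasi-inequality in (i) is called a K-IA3$_\ell$; one satisfying the quasi-inequality in (ii) is called a K-IA3$_s$. *)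

From HB Require Import structures.
From mathcomp Require Import all_boot all_order.
Set Implicit Arguments. Unset Strict Implicit. Unset Printing Implicit Defensive.
Import Order.TTheory.
Local Open Scope order_scope.

(* Abstract Kent algebra: a lattice L with four unary operations
   bs = Box_s, ds = Diamond_s, bl = Box_l, dl = Diamond_l. *)
Definition is_aKa (d : Order.disp_t) (L : latticeType d)
    (bs ds bl dl : L -> L) : Prop :=
  [/\ (forall a b : L, (ds a <= b) <-> (a <= bs b)),
      (forall a b : L, (dl a <= b) <-> (a <= bl b)),
      (forall a : L, [/\ bs a <= a, a <= ds a, a <= bl a & dl a <= a]) &
      (forall a : L, [/\ bs a <= bs (bs a), ds (ds a) <= ds a,
                        bl (bl a) <= bl a & dl a <= dl (dl a)])].

Definition K_IA3_l (d : Order.disp_t) (L : latticeType d) (bl dl : L -> L) : Prop :=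
  forall a b : L, bl a <= bl b -> dl a <= dl b -> a <= b.

Definition K_IA3_s (d : Order.disp_t) (L : latticeType d) (bs ds : L -> L) : Prop :=
  forall a b : L, bs a <= bs b -> ds a <= ds b -> a <= b.

From HB Require Import structures.
From mathcomp Require Import all_boot all_order.
Set Implicit Arguments. Unset Strict Implicit. Unset Printing Implicit Defensive.
Import Order.TTheory.
Local Open Scope order_scope.

(* In an aKa, [bl] and [ds] are closure operators and [dl] and [bs] interior
   operators, all monotone since they are adjoints.  For a monotone closure
   [c] and interior [i], the quasi-inequality "[c a <= c b] and [i a <= i b]
   imply [a <= b]" is equivalent to [a `&` c b <= i a `|` b]: instantiating
   the quasi-inequality at [a `&` c b] and [i a `|` b] gives the inequality,
   and conversely the hypotheses give [a <= a `&` c b] and [i a `|` b <= b]. *)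

Section Adjunction.
Variables (d : Order.disp_t) (L : latticeType d) (f g : L -> L).
Hypothesis f_adj_g : forall x y : L, (f x <= y) <-> (x <= g y).

Lemma left_adjoint_homo : {homo f : x y / x <= y}.
Proof. by move=> x y le_xy; apply/f_adj_g/(le_trans le_xy)/f_adj_g. Qed.

Lemma right_adjoint_homo : {homo g : x y / x <= y}.
Proof. by move=> x y le_xy; apply/f_adj_g/(le_trans _ le_xy)/f_adj_g. Qed.

End Adjunction.

Section ClosureInterior.
Variables (d : Order.disp_t) (L : latticeType d) (c i : L -> L).
Hypotheses (c_homo : {homo c : x y / x <= y}) (i_homo : {homo i : x y / x <= y}).
Hypotheses (c_ext : forall a, a <= c a) (c_idem : forall a, c (c a) <= c a).
Hypotheses (i_sub : forall a, i a <= a) (i_idem : forall a, i a <= i (i a)).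

Lemma K_IA3_l_meet_le_join :
  K_IA3_l c i <-> (forall a b : L, a `&` c b <= i a `|` b).
Proof.
split=> [Q a b | le_meet_join a b le_c le_i].
- apply: Q.
  + have le_cb : c (a `&` c b) <= c b by apply: le_trans (c_idem b); apply/c_homo/leIr.
    exact/(le_trans le_cb)/c_homo/leUr.
  + have le_ia : i (a `&` c b) <= i (i a) by apply: le_trans (i_idem a); apply/i_homo/leIl.
    exact/(le_trans le_ia)/i_homo/leUl.
- have le_a_meet : a <= a `&` c b by rewrite lexI lexx (le_trans (c_ext a)).
  have join_le_b : i a `|` b <= b by rewrite leUx lexx (le_trans le_i).
  exact: le_trans le_a_meet (le_trans (le_meet_join a b) join_le_b).
Qed.

End ClosureInterior.

Lemma K_IA3_l_sym (d : Order.disp_t) (L : latticeType d) (f g : L -> L) :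
  K_IA3_l f g <-> K_IA3_l g f.
Proof. by split=> Q a b le_f le_g; apply: Q. Qed.

Theorem mainTheorem6 (d : Order.disp_t) (L : latticeType d)
    (bs ds bl dl : L -> L) (HA : is_aKa bs ds bl dl) :
  (K_IA3_l bl dl <-> (forall a b : L, a `&` bl b <= dl a `|` b)) /\
  (K_IA3_s bs ds <-> (forall a b : L, a `&` ds b <= bs a `|` b)).
Proof.
case: HA => ds_adj_bs dl_adj_bl incl idem.
split.
- apply: K_IA3_l_meet_le_join.
  + exact: right_adjoint_homo dl_adj_bl.
  + exact: left_adjoint_homo dl_adj_bl.
  + by move=> a; case: (incl a).
  + by move=> a; case: (idem a).
  + by move=> a; case: (incl a).
  + by move=> a; case: (idem a).
- (* [K_IA3_s bs ds] unfolds to [K_IA3_l bs ds], with the interior [bs] first. *)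
  apply: iff_trans (K_IA3_l_sym bs ds) _.
  apply: K_IA3_l_meet_le_join.
  + exact: left_adjoint_homo ds_adj_bs.
  + exact: right_adjoint_homo ds_adj_bs.
  + by move=> a; case: (incl a).
  + by move=> a; case: (idem a).
  + by move=> a; case: (incl a).
  + by move=> a; case: (idem a).
Qed.
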